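(* Let $p\ge 1$ and let $G=(V,E)$ be a $p$-regular graph with a Hamiltonian cycle $(v_0,v_1,\dots,v_{n-1},v_0)$, $n=|V|\ge 3$. Let $G^*$ be the graph with vertex set $\{v_0,\dots,v_{n-1}\}\cup\{v_0',\dots,v_{n-1}'\}$ (the $v_i'$ new vertices) and edge set $E\cup\{\{v_i',v_j'\}\mid \{v_i,v_j\}\in E\}\cup\{\{v_i,v'_{(i+1)\bmod n}\}\mid i\in\{0,\dots,n-1\}\}$. Then $G^*$ is $(p+1)$-regular, $(v_{n-1},v_0',v_{n-1}',v_{n-2}',\dots,v_1',v_0,v_1,\dots,v_{n-2},v_{n-1})$ is a Hamiltonian cycle of $G^*$, and $G^*$ is 3-colorable if and only if $G$ is 3-colorable.
   Context: A graph $G=(V,E)$ is 3-colorable if there is a function $f\colon V\to\{1,2,3\}$ with $f(v)\neq f(w)$ for every edge $\{v,w\}\in E$. A graph is $k$-regular if every vertex has degree exactly $k$. A Hamiltonian cycle visits every vertex exactly once; the tuple $(u_0,\dots,u_{m-1},u_0)$ denotes the cycle with edges $\{u_i,u_{i+1 \bmod m}\}$. *)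

From mathcomp Require Import all_boot.
Set Implicit Arguments. Unset Strict Implicit. Unset Printing Implicit Defensive.

Section Graphs.
Variable T : finType.

Definition simple_graph (e : rel T) : Prop := symmetric e /\ irreflexive e.

Definition regular (k : nat) (e : rel T) : Prop :=
  forall x : T, #|[set y | e x y]| = k.

Definition three_colorable (e : rel T) : Prop :=
  exists f : T -> 'I_3, forall x y, e x y -> f x != f y.

Definition ham_cycle (e : rel T) (s : seq T) : Prop :=
  [/\ uniq s, forall x : T, x \in s & cycle e s].

(* The graph G^* built from G = (T, e) and the Hamiltonian cycle
   s = [:: v_0; ...; v_{n-1}].  Vertices: inl v = v, inr v = v'. *)
Definition star_rel (e : rel T) (s : seq T) : rel (T + T) :=
  fun a b =>
    match a, b with
    | inl x, inl y => e x y
    | inr x, inr y => e x y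
    | inl x, inr y =>
        [exists i : 'I_(size s),
           (x == tnth (in_tuple s) i) && (y == tnth (in_tuple s) (ordS i))]
    | inr y, inl x =>
        [exists i : 'I_(size s),
           (x == tnth (in_tuple s) i) && (y == tnth (in_tuple s) (ordS i))]
    end.

(* The cycle (v_{n-1}, v_0', v_{n-1}', v_{n-2}', ..., v_1', v_0, v_1, ..., v_{n-2})
   of G^* (closing back at v_{n-1}). *)
Definition star_cycle (s : seq T) : seq (T + T) :=
  match s with
  | [::] => [::]
  | x0 :: s' =>
      inl (last x0 s') :: inr x0 :: rev (map inr s') ++ map inl (belast x0 s')
  end.

End Graphs.

From mathcomp Require Import all_boot.
Set Implicit Arguments. Unset Strict Implicit. Unset Printing Implicit Defensive.

(* Write s = v_0 ... v_{n-1} for the Hamiltonian cycle of G and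
   G^* for star_rel e s.  Since s is duplicate-free, the "cross" edges of G^*
   are exactly the pairs {v, (next s v)'}: they form a perfect matching
   between the two copies of V (lemma star_cross_edge).  Consequently:
   - every v gains exactly the neighbour (next s v)' and every v' exactly the
     neighbour prev s v, so G^* is (p+1)-regular (star_regular);
   - star_cycle s is a permutation of the 2n vertices, and its consecutive
     vertices are joined by the cross edge v_{n-1} -- v_0', by the primed copy
     of the cycle traversed backwards, by the cross edge v_1' -- v_0 and by the
     unprimed cycle traversed forwards (star_ham_cycle);
   - the projection v, v' |-> v is a graph homomorphism from G^* onto G, and
     v |-> v is one from G into G^*; colourings pull back along homomorphisms
     (colorable_hom), which gives the equivalence of 3-colourability. *)

Lemma colorable_hom (T1 T2 : finType) (e1 : rel T1) (e2 : rel T2)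
    (h : T1 -> T2) :
  (forall x y, e1 x y -> e2 (h x) (h y)) ->
  three_colorable e2 -> three_colorable e1.
Proof. by move=> hom [f fP]; exists (f \o h) => x y /hom /fP. Qed.

Lemma card_set_sum (T1 T2 : finType) (P : pred (T1 + T2)) :
  #|[set z | P z]| = #|[set x | P (inl x)]| + #|[set y | P (inr y)]|.
Proof. by rewrite -!sum1dep_card big_sumType. Qed.

Section Cycles.
Variable T : eqType.

Lemma tnth_ordS (s : seq T) (i : 'I_(size s)) : uniq s ->
  tnth (in_tuple s) (ordS i) = next s (tnth (in_tuple s) i).
Proof.
case: s i => [|x0 s'] i Us; first by case: i.
rewrite next_nth mem_tnth !(tnth_nth x0) [tval _]/= index_uniq //=.
have [lt_i1 | ge_i1] := ltnP i.+1 (size s').+1.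
  by rewrite modn_small //= (set_nth_default x0).
have -> : nat_of_ord i = size s'.
  by apply/eqP; rewrite eqn_leq -ltnS (ltn_ord i) -ltnS.
by rewrite modnn /= nth_default.
Qed.

Lemma next_last (x : T) (s : seq T) : uniq (x :: s) ->
  next (x :: s) (last x s) = x.
Proof. by move/cycle_next; rewrite /= rcons_path => /andP[_ /eqP]. Qed.

Lemma cycle_rev_path (e : rel T) (x : T) (s : seq T) :
  symmetric e -> cycle e (x :: s) -> path e x (rev s).
Proof.
move=> esym cyc.
have : cycle e (rev (x :: s)).
  by rewrite rev_cycle (@eq_cycle _ _ e) // => a b; rewrite esym.
by rewrite rev_cons -(rotr_cycle 1) rotr1_rcons /= rcons_path => /andP[].
Qed.

End Cycles.

Lemma star_cycleE (T : finType) (x : T) (s : seq T) :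
  star_cycle (x :: s) =
  inl (last x s) :: map inr (x :: rev s) ++ map inl (belast x s).
Proof. by rewrite /= map_rev. Qed.

Lemma star_cycle_perm (T : finType) (s : seq T) :
  perm_eq (star_cycle s) (map inl s ++ map inr s).
Proof.
case: s => [|x s] //; rewrite star_cycleE -cat1s catA perm_catC.
rewrite catA cats1 -map_rcons -lastI perm_cat2l.
by apply: perm_map; rewrite perm_cons perm_rev.
Qed.

Section StarGraph.
Variables (T : finType) (e : rel T) (s : seq T).
Hypothesis s_uniq : uniq s.
Let R := star_rel e s.

Lemma star_cross_edge (x y : T) :
  R (inl x) (inr y) = (x \in s) && (y == next s x).
Proof.
apply/existsP/andP => [[i /andP[/eqP -> /eqP ->]] | [xs /eqP ->]].
  by rewrite mem_tnth tnth_ordS.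
case/(tnthP (in_tuple s)): xs => i ->; exists i.
by rewrite eqxx /= -tnth_ordS.
Qed.

Hypothesis s_cover : forall x : T, x \in s.

(* G^* is obtained from G by adding a perfect matching between the copies,
   hence raises every degree by one. *)
Lemma star_regular (p : nat) : regular p e -> regular p.+1 R.
Proof.
move=> reg [] x; rewrite card_set_sum.
  have -> : [set y | R (inl x) (inr y)] = [set next s x].
    by apply/setP => y; rewrite !inE star_cross_edge s_cover.
  by rewrite cards1 reg addn1.
have -> : [set y | R (inr x) (inl y)] = [set prev s x].
  apply/setP => y; rewrite !inE -/R -[R _ _]/(R (inl y) (inr x)).
  rewrite star_cross_edge s_cover /=.
  by apply/eqP/eqP => [-> | ->]; rewrite ?prev_next ?next_prev.
by rewrite cards1 reg add1n.
Qed.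

Hypotheses (e_sym : symmetric e) (s_cycle : cycle e s).

Lemma star_proj_hom (a b : T + T) :
  R a b -> e (match a with inl x | inr x => x end)
             (match b with inl x | inr x => x end).
Proof.
have cross x y : R (inl x) (inr y) -> e x y.
  by rewrite star_cross_edge => /andP[xs /eqP ->]; exact: next_cycle.
case: a b => x [] y //; first exact: cross.
by move=> /cross; rewrite e_sym.
Qed.

Lemma star_cycle_cycle : cycle R (star_cycle s).
Proof.
case def_s: s => [|x s'] //.
have cross_in : R (inl (last x s')) (inr x).
  by rewrite star_cross_edge def_s mem_last next_last -?def_s ?eqxx.
have cross_out : R (inr (last x (rev s'))) (inl x).
  rewrite -[R _ _]/(R (inl x) (inr _)) star_cross_edge s_cover def_s /=.
  by case: (s') => [|y t] /=; rewrite ?rev_cons ?last_rcons eqxx.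
have primed : path e x (rev s') by apply: cycle_rev_path => //; rewrite -def_s.
have unprimed : path e x s'.
  by move: s_cycle; rewrite def_s /= rcons_path => /andP[].
rewrite star_cycleE /= rcons_cat -map_rcons -lastI cat_path last_map path_map.
apply/and3P; split; [exact: cross_in | exact: primed |].
by rewrite /= path_map; apply/andP.
Qed.

Lemma star_ham_cycle : ham_cycle R (star_cycle s).
Proof.
have inl_inj : injective (@inl T T) by move=> ? ? [].
have inr_inj : injective (@inr T T) by move=> ? ? [].
split; last exact: star_cycle_cycle.
- rewrite (perm_uniq (star_cycle_perm s)) cat_uniq !map_inj_uniq // s_uniq.
  by rewrite andbT; apply/hasP => -[_ /mapP[? _ ->] /mapP[]].
- by move=> a; rewrite (perm_mem (star_cycle_perm s)) mem_cat; case: a => x;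
    rewrite ?mem_map ?s_cover ?orbT.
Qed.

(* G embeds into G^* (v |-> v) and G^* folds onto G (v, v' |-> v), so
   colourings transfer in both directions. *)
Lemma star_colorable : three_colorable R <-> three_colorable e.
Proof.
split; first by apply: (colorable_hom (h := inl)).
exact: colorable_hom star_proj_hom.
Qed.

End StarGraph.

Theorem mainTheorem5 (T : finType) (e : rel T) (p : nat) (s : seq T) :
  simple_graph e -> 1 <= p -> regular p e ->
  3 <= #|T| -> ham_cycle e s ->
  [/\ regular p.+1 (star_rel e s),
      ham_cycle (star_rel e s) (star_cycle s)
    & three_colorable (star_rel e s) <-> three_colorable e].
Proof.
move=> [e_sym _] _ reg _ [s_uniq s_cover s_cycle].
split; [exact: star_regular | exact: star_ham_cycle | exact: star_colorable].
Qed.
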